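(* (Intuitionistic modal logic.) For all propositions $A,B,C$: (MP) $\vdash^H_{\mathbf{CPL}} A\supset B$ and $\vdash^H_{\mathbf{CPL}} A$ imply $\vdash^H_{\mathbf{CPL}} B$; and $\vdash^H_{\mathbf{CPL*}} A\supset B$ and $\vdash^H_{\mathbf{CPL*}} A$ imply $\vdash^H_{\mathbf{CPL*}} B$. (I) $A\supset A$; (K) $A\supset B\supset A$; (S) $(A\supset B\supset C)\supset(A\supset B)\supset A\supset C$; ($\bot E$) $\bot\supset A$ — each of these holds under both $\vdash^H_{\mathbf{CPL}}$ and $\vdash^H_{\mathbf{CPL*}}$. (NEC) $\vdash^H_{\mathbf{CPL}} A$ implies $\vdash^H_{\mathbf{CPL}}\Box A$, and $\vdash^H_{\mathbf{CPL*}} A$ implies $\vdash^H_{\mathbf{CPL*}}\Box A$. ($K\Box$) $\Box(A\supset B)\supset\Box A\supset\Box B$ and ($K\Diamond$) $\Box(A\supset B)\supset\Diamond A\supset\Diamond B$ hold under both $\vdash^H_{\mathbf{CPL}}$ and $\vdash^H_{\mathbf{CPL*}}$. ($4\Box$) $\Box A\supset\Box\Box A$ holds under both $\vdash^H_{\mathbf{CPL}}$ and $\vdash^H_{\mathbf{CPL*}}$ when only transitive accessibility relations are considered. ($\Diamond\bot$) $\vdash^H_{\mathbf{CPL*}}\neg\Diamond\bot$. ($4\Diamond$) $\Diamond\Diamond A\supset\Diamond A$ holds under $\vdash^H_{\mathbf{CPL*}}$ when only transitive accessibility relations are considered. Moreover, $\neg\Diamond\bot$ is not an axiom of CPL, and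 $(\Diamond A\supset\Box B)\supset\Box(A\supset B)$ is an axiom of neither CPL nor CPL*.
   Context: A set $W$ of worlds with a binary accessibility relation $\prec$ is converse well-founded if there is no infinite chain $w_0\prec w_1\prec\cdots$; $\prec^*$ denotes its reflexive–transitive closure. Propositions: $A,B,C ::= Q\mid\bot\mid A\supset B\mid\Diamond A\mid\Box A$ ($Q$ atomic); $\neg A$ abbreviates $A\supset\bot$, and $\supset$ associates to the right. A context $\Gamma$ is a finite collection of judgments $A[w]$. Given such $(W,\prec)$, $\Gamma\vdash_{\mathbf{CPL}}A[w]$ is defined one world at a time (provability at $w$ after provability at all worlds reachable from $w$ by one or more $\prec$-steps) as the least relation closed under: (hyp) $\Gamma,A[w]\vdash A[w]$; ($\bot E$) $\Gamma\vdash\bot[w]$ implies $\Gamma\vdash C[w]$; ($\supset I$) $\Gamma,A[w]\vdash B[w]$ implies $\Gamma\vdash A\supset B[w]$; ($\supset E$) $\Gamma\vdash A\supset B[w]$ and $\Gamma\vdash A[w]$ imply $\Gamma\vdash B[w]$; ($\Diamond I$) $w\prec w'$ and $\Gamma\vdash A[w']$ imply $\Gamma\vdash\Diamond A[w]$; ($\Box I$) if $\Gamma\vdash A[w']$ for all $w'$ with $w\prec w'$ then $\Gamma\vdash\Box A[w]$; ($\Diamond E$) if $\Gamma\vdash\Diamond A[w]$ and for all $w'$ with $w\prec w'$, $\Gamma\vdash A[w']$ implies $\Gamma\vdash C[w]$, then $\Gamma\vdash C[w]$; ($\Box E$) if $\Gamma\vdash\Box A[w]$ and ($\Gamma\vdash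 A[w']$ for all $w'$ with $w\prec w'$) implies $\Gamma\vdash C[w]$, then $\Gamma\vdash C[w]$. $\Gamma\vdash_{\mathbf{CPL*}}A[w]$ is defined identically except that: ($\bot E$) $w'\prec^* w$ and $\Gamma\vdash\bot[w]$ imply $\Gamma\vdash C[w']$; ($\Diamond E$) if $w''\prec^* w$, $\Gamma\vdash\Diamond A[w]$, and for all $w'$ with $w\prec w'$, $\Gamma\vdash A[w']$ implies $\Gamma\vdash C[w'']$, then $\Gamma\vdash C[w'']$; ($\Box E$) if $w''\prec^* w$, $\Gamma\vdash\Box A[w]$, and ($\Gamma\vdash A[w']$ for all $w'$ with $w\prec w'$) implies $\Gamma\vdash C[w'']$, then $\Gamma\vdash C[w'']$. $\vdash^H_{\mathbf{CPL}}A$ means: for every converse well-founded $(W,\prec)$, every $w\in W$ and every context $\Gamma$, $\Gamma\vdash_{\mathbf{CPL}}A[w]$; likewise $\vdash^H_{\mathbf{CPL*}}A$ with $\vdash_{\mathbf{CPL*}}$. ''Holds when only transitive accessibility relations are considered'' means the same quantification restricted to transitive $\prec$. A schema is ''not an axiom'' of CPL (resp. CPL* ) if there exist a converse well-founded $(W,\prec)$, a world $w$, a context $\Gamma$, and an instance $A$ of the schema with $\Gamma\nvdash_{\mathbf{CPL}}A[w]$ (resp. $\Gamma\nvdash_{\mathbf{CPL*}}A[w]$). *)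

(* Intuitionistic modal logic CPL / CPL* (provability defined
   one world at a time over a converse well-founded frame). *)
From Stdlib Require Import List Relations Wellfounded.
Import ListNotations.

Set Implicit Arguments.

Inductive form : Type :=
| Atom : nat -> form
| Bot : form
| Imp : form -> form -> form
| Dia : form -> form
| Box : form -> form.

Definition Neg (A : form) : form := Imp A Bot.

Section Provability.
Variables (W : Type) (R : W -> W -> Prop).

Definition ctx := list (form * W).

(* Provability at the current world x, given provability P at worlds
   strictly reachable from x (already defined, stratification).
   Rules of CPL. *)
Inductive cpl_step (x : W) (P : W -> ctx -> form -> Prop) : ctx -> form -> Prop :=
| cpl_hyp : forall G A, In (A, x) G -> cpl_step x P G A
| cpl_botE : forall G C, cpl_step x P G Bot -> cpl_step x P G C
| cpl_impI : forall G A B, cpl_step x P ((A, x) :: G) B -> cpl_step x P G (Imp A B)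
| cpl_impE : forall G A B, cpl_step x P G (Imp A B) -> cpl_step x P G A -> cpl_step x P G B
| cpl_diaI : forall G A y, R x y -> P y G A -> cpl_step x P G (Dia A)
| cpl_boxI : forall G A, (forall y, R x y -> P y G A) -> cpl_step x P G (Box A)
| cpl_diaE : forall G A C, cpl_step x P G (Dia A) ->
    (forall y, R x y -> P y G A -> cpl_step x P G C) -> cpl_step x P G C
| cpl_boxE : forall G A C, cpl_step x P G (Box A) ->
    ((forall y, R x y -> P y G A) -> cpl_step x P G C) -> cpl_step x P G C.

(* Rules of CPL*.  A premise "w'' ≺* w" is split into the two cases
   w = w'' (premise at the current world) and w'' ≺+ w (premise at an
   already-defined world). *)
Inductive cpls_step (x : W) (P : W -> ctx -> form -> Prop) : ctx -> form -> Prop :=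
| cpls_hyp : forall G A, In (A, x) G -> cpls_step x P G A
| cpls_botE_here : forall G C, cpls_step x P G Bot -> cpls_step x P G C
| cpls_botE_there : forall G C z, clos_trans W R x z -> P z G Bot -> cpls_step x P G C
| cpls_impI : forall G A B, cpls_step x P ((A, x) :: G) B -> cpls_step x P G (Imp A B)
| cpls_impE : forall G A B, cpls_step x P G (Imp A B) -> cpls_step x P G A -> cpls_step x P G B
| cpls_diaI : forall G A y, R x y -> P y G A -> cpls_step x P G (Dia A)
| cpls_boxI : forall G A, (forall y, R x y -> P y G A) -> cpls_step x P G (Box A)
| cpls_diaE_here : forall G A C, cpls_step x P G (Dia A) ->
    (forall y, R x y -> P y G A -> cpls_step x P G C) -> cpls_step x P G C
| cpls_diaE_there : forall G A C z, clos_trans W R x z -> P z G (Dia A) ->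
    (forall y, R z y -> P y G A -> cpls_step x P G C) -> cpls_step x P G C
| cpls_boxE_here : forall G A C, cpls_step x P G (Box A) ->
    ((forall y, R x y -> P y G A) -> cpls_step x P G C) -> cpls_step x P G C
| cpls_boxE_there : forall G A C z, clos_trans W R x z -> P z G (Box A) ->
    ((forall y, R z y -> P y G A) -> cpls_step x P G C) -> cpls_step x P G C.

Definition conv_wf : Prop := well_founded (fun a b => R b a).

Lemma conv_wf_trans : conv_wf -> well_founded (fun a b => clos_trans W R b a).
Proof.
  intro Hwf.
  apply wf_incl with (R2 := clos_trans W (fun a b => R b a)).
  - intros a b H. induction H.
    + apply t_step; assumption.
    + eapply t_trans; eassumption.
  - apply wf_clos_trans. exact Hwf.
Qed.

Definition stratify (step : W -> (W -> ctx -> form -> Prop) -> ctx -> form -> Prop)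
  (Hwf : conv_wf) : W -> ctx -> form -> Prop :=
  Fix (conv_wf_trans Hwf) (fun _ => ctx -> form -> Prop)
    (fun x rec => step x (fun y G A => exists H : clos_trans W R x y, rec y H G A)).

Definition cpl (Hwf : conv_wf) (w : W) (G : ctx) (A : form) : Prop :=
  stratify cpl_step Hwf w G A.

Definition cpls (Hwf : conv_wf) (w : W) (G : ctx) (A : form) : Prop :=
  stratify cpls_step Hwf w G A.

End Provability.

Definition HCPL (A : form) : Prop :=
  forall (W : Type) (R : W -> W -> Prop) (Hwf : conv_wf R) (w : W) (G : ctx W),
    cpl Hwf w G A.

Definition HCPLs (A : form) : Prop :=
  forall (W : Type) (R : W -> W -> Prop) (Hwf : conv_wf R) (w : W) (G : ctx W),
    cpls Hwf w G A.

Definition HCPL_tr (A : form) : Prop :=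
  forall (W : Type) (R : W -> W -> Prop) (Hwf : conv_wf R), transitive W R ->
    forall (w : W) (G : ctx W), cpl Hwf w G A.

Definition HCPLs_tr (A : form) : Prop :=
  forall (W : Type) (R : W -> W -> Prop) (Hwf : conv_wf R), transitive W R ->
    forall (w : W) (G : ctx W), cpls Hwf w G A.

(* The non-derivabilities use the two-world frame 0 ≺ 1.  At the dead end 1 the modal
   rules are vacuous, so derivations there are classically sound (◇ read as false, □ as true) and
   depend only on the hypotheses located at 1.  At the root 0, whose only successor is 1, read
   both ◇A and □A as "A is derivable at 1" and atoms as false: derivations at 0 are sound for this
   reading, in CPL* provided ⊥ is not derivable at 1 (because of the eliminations at later
   worlds).  Without hypotheses (◇p ⊃ □q) ⊃ □(p ⊃ q) fails at 0; with the hypothesis ⊥[1], ◇⊥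
   holds at 0, so ¬◇⊥ fails there in CPL. *)
From Stdlib Require Import List Relations FunctionalExtensionality.
Import ListNotations.
Set Implicit Arguments.

Section Unfolding.
Variables (W : Type) (R : W -> W -> Prop).
Context {Hwf : conv_wf R}.

Lemma stratify_unfold step x :
  stratify step Hwf x =
  step x (fun y G A => exists _ : clos_trans W R x y, stratify step Hwf y G A).
Proof.
  unfold stratify; rewrite Fix_eq; [reflexivity |].
  intros x0 f g Hfg.
  assert (f = g) as -> by (do 2 (apply functional_extensionality_dep; intro); apply Hfg).
  reflexivity.
Qed.

Definition cpl_beyond x y G A := exists _ : clos_trans W R x y, cpl Hwf y G A.
Definition cpls_beyond x y G A := exists _ : clos_trans W R x y, cpls Hwf y G A.

Lemma cpl_unfold x G A : cpl Hwf x G A <-> cpl_step R x (cpl_beyond x) G A.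
Proof. unfold cpl; rewrite stratify_unfold; reflexivity. Qed.

Lemma cpls_unfold x G A : cpls Hwf x G A <-> cpls_step R x (cpls_beyond x) G A.
Proof. unfold cpls; rewrite stratify_unfold; reflexivity. Qed.

Lemma cpl_mp {x G A B} : cpl Hwf x G (Imp A B) -> cpl Hwf x G A -> cpl Hwf x G B.
Proof.
  intros hAB hA; apply cpl_unfold.
  apply cpl_impE with A; apply cpl_unfold; assumption.
Qed.

Lemma cpls_mp {x G A B} : cpls Hwf x G (Imp A B) -> cpls Hwf x G A -> cpls Hwf x G B.
Proof.
  intros hAB hA; apply cpls_unfold.
  apply cpls_impE with A; apply cpls_unfold; assumption.
Qed.

Lemma cpl_beyond_succ {x y G A} : R x y -> cpl Hwf y G A -> cpl_beyond x y G A.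
Proof. intros Rxy h; exists (t_step _ _ _ _ Rxy); exact h. Qed.

Lemma cpls_beyond_succ {x y G A} : R x y -> cpls Hwf y G A -> cpls_beyond x y G A.
Proof. intros Rxy h; exists (t_step _ _ _ _ Rxy); exact h. Qed.

Lemma cpl_beyond_mp {x y G A B} :
  cpl_beyond x y G (Imp A B) -> cpl_beyond x y G A -> cpl_beyond x y G B.
Proof. intros [c hAB] [_ hA]; exists c; exact (cpl_mp hAB hA). Qed.

Lemma cpls_beyond_mp {x y G A B} :
  cpls_beyond x y G (Imp A B) -> cpls_beyond x y G A -> cpls_beyond x y G B.
Proof. intros [c hAB] [_ hA]; exists c; exact (cpls_mp hAB hA). Qed.

End Unfolding.

Arguments cpl_beyond {W R} Hwf x y G A.
Arguments cpls_beyond {W R} Hwf x y G A.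

Lemma HCPL_mp A B : HCPL (Imp A B) -> HCPL A -> HCPL B.
Proof. intros hAB hA W R Hwf w G; exact (cpl_mp (hAB W R Hwf w G) (hA W R Hwf w G)). Qed.

Lemma HCPLs_mp A B : HCPLs (Imp A B) -> HCPLs A -> HCPLs B.
Proof. intros hAB hA W R Hwf w G; exact (cpls_mp (hAB W R Hwf w G) (hA W R Hwf w G)). Qed.

Lemma HCPL_I A : HCPL (Imp A A).
Proof. intros W R Hwf w G; apply cpl_unfold, cpl_impI, cpl_hyp; now left. Qed.

Lemma HCPLs_I A : HCPLs (Imp A A).
Proof. intros W R Hwf w G; apply cpls_unfold, cpls_impI, cpls_hyp; now left. Qed.

Lemma HCPL_K A B : HCPL (Imp A (Imp B A)).
Proof. intros W R Hwf w G; apply cpl_unfold, cpl_impI, cpl_impI, cpl_hyp; simpl; auto. Qed.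

Lemma HCPLs_K A B : HCPLs (Imp A (Imp B A)).
Proof. intros W R Hwf w G; apply cpls_unfold, cpls_impI, cpls_impI, cpls_hyp; simpl; auto. Qed.

Lemma HCPL_S A B C : HCPL (Imp (Imp A (Imp B C)) (Imp (Imp A B) (Imp A C))).
Proof.
  intros W R Hwf w G; apply cpl_unfold, cpl_impI, cpl_impI, cpl_impI.
  apply cpl_impE with B; apply cpl_impE with A; apply cpl_hyp; simpl; auto.
Qed.

Lemma HCPLs_S A B C : HCPLs (Imp (Imp A (Imp B C)) (Imp (Imp A B) (Imp A C))).
Proof.
  intros W R Hwf w G; apply cpls_unfold, cpls_impI, cpls_impI, cpls_impI.
  apply cpls_impE with B; apply cpls_impE with A; apply cpls_hyp; simpl; auto.
Qed.

Lemma HCPL_botE A : HCPL (Imp Bot A).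
Proof. intros W R Hwf w G; apply cpl_unfold, cpl_impI, cpl_botE, cpl_hyp; now left. Qed.

Lemma HCPLs_botE A : HCPLs (Imp Bot A).
Proof. intros W R Hwf w G; apply cpls_unfold, cpls_impI, cpls_botE_here, cpls_hyp; now left. Qed.

Lemma HCPL_nec A : HCPL A -> HCPL (Box A).
Proof.
  intros hA W R Hwf w G; apply cpl_unfold, cpl_boxI; intros y Rwy.
  exact (cpl_beyond_succ Rwy (hA W R Hwf y G)).
Qed.

Lemma HCPLs_nec A : HCPLs A -> HCPLs (Box A).
Proof.
  intros hA W R Hwf w G; apply cpls_unfold, cpls_boxI; intros y Rwy.
  exact (cpls_beyond_succ Rwy (hA W R Hwf y G)).
Qed.

Lemma HCPL_Kbox A B : HCPL (Imp (Box (Imp A B)) (Imp (Box A) (Box B))).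
Proof.
  intros W R Hwf w G; apply cpl_unfold, cpl_impI, cpl_impI.
  apply cpl_boxE with (Imp A B); [apply cpl_hyp; simpl; auto | intro hAB].
  apply cpl_boxE with A; [apply cpl_hyp; now left | intro hA].
  apply cpl_boxI; intros y Rwy; exact (cpl_beyond_mp (hAB y Rwy) (hA y Rwy)).
Qed.

Lemma HCPLs_Kbox A B : HCPLs (Imp (Box (Imp A B)) (Imp (Box A) (Box B))).
Proof.
  intros W R Hwf w G; apply cpls_unfold, cpls_impI, cpls_impI.
  apply cpls_boxE_here with (Imp A B); [apply cpls_hyp; simpl; auto | intro hAB].
  apply cpls_boxE_here with A; [apply cpls_hyp; now left | intro hA].
  apply cpls_boxI; intros y Rwy; exact (cpls_beyond_mp (hAB y Rwy) (hA y Rwy)).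
Qed.

Lemma HCPL_Kdia A B : HCPL (Imp (Box (Imp A B)) (Imp (Dia A) (Dia B))).
Proof.
  intros W R Hwf w G; apply cpl_unfold, cpl_impI, cpl_impI.
  apply cpl_boxE with (Imp A B); [apply cpl_hyp; simpl; auto | intro hAB].
  apply cpl_diaE with A; [apply cpl_hyp; now left | intros y Rwy hA].
  apply cpl_diaI with y; [exact Rwy | exact (cpl_beyond_mp (hAB y Rwy) hA)].
Qed.

Lemma HCPLs_Kdia A B : HCPLs (Imp (Box (Imp A B)) (Imp (Dia A) (Dia B))).
Proof.
  intros W R Hwf w G; apply cpls_unfold, cpls_impI, cpls_impI.
  apply cpls_boxE_here with (Imp A B); [apply cpls_hyp; simpl; auto | intro hAB].
  apply cpls_diaE_here with A; [apply cpls_hyp; now left | intros y Rwy hA].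
  apply cpls_diaI with y; [exact Rwy | exact (cpls_beyond_mp (hAB y Rwy) hA)].
Qed.

Lemma HCPL_tr_4box A : HCPL_tr (Imp (Box A) (Box (Box A))).
Proof.
  intros W R Hwf Rtr w G; apply cpl_unfold, cpl_impI.
  apply cpl_boxE with A; [apply cpl_hyp; now left | intro hA].
  apply cpl_boxI; intros y Rwy; apply (cpl_beyond_succ Rwy).
  apply cpl_unfold, cpl_boxI; intros z Ryz; apply (cpl_beyond_succ Ryz).
  destruct (hA z (Rtr _ _ _ Rwy Ryz)) as [_ h]; exact h.
Qed.

Lemma HCPLs_tr_4box A : HCPLs_tr (Imp (Box A) (Box (Box A))).
Proof.
  intros W R Hwf Rtr w G; apply cpls_unfold, cpls_impI.
  apply cpls_boxE_here with A; [apply cpls_hyp; now left | intro hA].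
  apply cpls_boxI; intros y Rwy; apply (cpls_beyond_succ Rwy).
  apply cpls_unfold, cpls_boxI; intros z Ryz; apply (cpls_beyond_succ Ryz).
  destruct (hA z (Rtr _ _ _ Rwy Ryz)) as [_ h]; exact h.
Qed.

Lemma HCPLs_neg_dia_bot : HCPLs (Neg (Dia Bot)).
Proof.
  intros W R Hwf w G; apply cpls_unfold, cpls_impI.
  apply cpls_diaE_here with Bot; [apply cpls_hyp; now left | intros y _ [c h]].
  apply cpls_botE_there with y; [exact c | exists c; exact h].
Qed.

Lemma HCPLs_tr_4dia A : HCPLs_tr (Imp (Dia (Dia A)) (Dia A)).
Proof.
  intros W R Hwf Rtr w G; apply cpls_unfold, cpls_impI.
  apply cpls_diaE_here with (Dia A); [apply cpls_hyp; now left | intros y Rwy [c h]].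
  apply cpls_diaE_there with A y; [exact c | exists c; exact h |].
  intros z Ryz [c' h']; apply cpls_diaI with z; [exact (Rtr _ _ _ Rwy Ryz) |].
  exists c'; exact h'.
Qed.

Fixpoint eval_dead_end (v : nat -> Prop) (f : form) : Prop :=
  match f with
  | Atom n => v n
  | Bot => False
  | Imp a b => eval_dead_end v a -> eval_dead_end v b
  | Dia _ => False
  | Box _ => True
  end.

Section DeadEnd.
Variables (W : Type) (R : W -> W -> Prop) (x : W).

Definition incl_at (G1 G2 : ctx W) := forall A, In (A, x) G1 -> In (A, x) G2.

Lemma incl_at_cons_l (y : W) (G1 G2 : ctx W) B :
  y <> x -> incl_at G1 G2 -> incl_at ((B, y) :: G1) G2.
Proof. intros yx hincl A [[= _ E] | hin]; [destruct (yx E) | auto]. Qed.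

Lemma incl_at_cons_r (G1 G2 : ctx W) b :
  incl_at G1 G2 -> incl_at G1 (b :: G2).
Proof. intros hincl A hin; right; auto. Qed.

Hypothesis x_dead : forall y, ~ R x y.

Lemma clos_trans_from_dead_end z : ~ clos_trans W R x z.
Proof.
  intro c; apply clos_trans_t1n in c.
  destruct c as [z Rxz | y z Rxy _]; [exact (x_dead Rxz) | exact (x_dead Rxy)].
Qed.

Lemma cpl_step_dead_end_sound v P G C :
  cpl_step R x P G C -> (forall A, In (A, x) G -> eval_dead_end v A) -> eval_dead_end v C.
Proof.
  induction 1 as [G A hin | G C hbot IHbot | G A B hB IHB | G A B hAB IHAB hA IHA
    | G A y Rxy _ | G A _ | G A C hdia IHdia hk IHk | G A C hbox IHbox hk IHk];
    simpl; intro hG.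
  - exact (hG A hin).
  - destruct (IHbot hG).
  - intro ha; apply IHB; intros A' [[= ->] | hin]; auto.
  - exact (IHAB hG (IHA hG)).
  - destruct (x_dead Rxy).
  - exact I.
  - destruct (IHdia hG).
  - apply IHk; [intros y Rxy; destruct (x_dead Rxy) | exact hG].
Qed.

Lemma cpls_step_dead_end_sound v P G C :
  cpls_step R x P G C -> (forall A, In (A, x) G -> eval_dead_end v A) -> eval_dead_end v C.
Proof.
  induction 1 as [G A hin | G C hbot IHbot | G C z c _ | G A B hB IHB | G A B hAB IHAB hA IHA
    | G A y Rxy _ | G A _ | G A C hdia IHdia hk IHk | G A C z c _ _ _
    | G A C hbox IHbox hk IHk | G A C z c _ _ _];
    simpl; intro hG; try destruct (clos_trans_from_dead_end c).
  - exact (hG A hin).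
  - destruct (IHbot hG).
  - intro ha; apply IHB; intros A' [[= ->] | hin]; auto.
  - exact (IHAB hG (IHA hG)).
  - destruct (x_dead Rxy).
  - exact I.
  - destruct (IHdia hG).
  - apply IHk; [intros y Rxy; destruct (x_dead Rxy) | exact hG].
Qed.

Lemma cpl_step_dead_end_weaken P G1 G2 C :
  incl_at G1 G2 -> cpl_step R x P G1 C -> cpl_step R x P G2 C.
Proof.
  intros hincl h; revert G2 hincl.
  induction h as [G A hin | G C hbot IHbot | G A B hB IHB | G A B hAB IHAB hA IHA
    | G A y Rxy _ | G A _ | G A C hdia IHdia hk IHk | G A C hbox IHbox hk IHk];
    intros G2 hincl.
  - apply cpl_hyp, hincl, hin.
  - apply cpl_botE, IHbot, hincl.
  - apply cpl_impI, IHB; intros A' [E | hin]; [left; exact E | right; auto].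
  - apply cpl_impE with A; auto.
  - destruct (x_dead Rxy).
  - apply cpl_boxI; intros y Rxy; destruct (x_dead Rxy).
  - apply cpl_diaE with A; [auto | intros y Rxy; destruct (x_dead Rxy)].
  - apply cpl_boxE with A; [auto | intros _].
    apply IHk; [intros y Rxy; destruct (x_dead Rxy) | exact hincl].
Qed.

Lemma cpls_step_dead_end_weaken P G1 G2 C :
  incl_at G1 G2 -> cpls_step R x P G1 C -> cpls_step R x P G2 C.
Proof.
  intros hincl h; revert G2 hincl.
  induction h as [G A hin | G C hbot IHbot | G C z c _ | G A B hB IHB | G A B hAB IHAB hA IHA
    | G A y Rxy _ | G A _ | G A C hdia IHdia hk IHk | G A C z c _ _ _
    | G A C hbox IHbox hk IHk | G A C z c _ _ _];
    intros G2 hincl; try destruct (clos_trans_from_dead_end c).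
  - apply cpls_hyp, hincl, hin.
  - apply cpls_botE_here, IHbot, hincl.
  - apply cpls_impI, IHB; intros A' [E | hin]; [left; exact E | right; auto].
  - apply cpls_impE with A; auto.
  - destruct (x_dead Rxy).
  - apply cpls_boxI; intros y Rxy; destruct (x_dead Rxy).
  - apply cpls_diaE_here with A; [auto | intros y Rxy; destruct (x_dead Rxy)].
  - apply cpls_boxE_here with A; [auto | intros _].
    apply IHk; [intros y Rxy; destruct (x_dead Rxy) | exact hincl].
Qed.

Lemma cpls_step_dead_end_dia_bot P G A :
  cpls_step R x P G (Dia A) -> cpls_step R x P G Bot.
Proof. intro h; apply cpls_diaE_here with A; [exact h | intros y Rxy; destruct (x_dead Rxy)]. Qed.

End DeadEnd.

Definition bool_lt (a b : bool) : Prop := a = false /\ b = true.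

Lemma bool_lt_false_true : bool_lt false true.
Proof. split; reflexivity. Qed.

Lemma bool_lt_true_dead_end y : ~ bool_lt true y.
Proof. intros [E _]; discriminate E. Qed.

Lemma clos_trans_bool_lt a b : clos_trans bool bool_lt a b -> bool_lt a b.
Proof. induction 1 as [| a b c _ [-> _] _ [_ ->]]; [assumption | exact bool_lt_false_true]. Qed.

Lemma bool_lt_conv_wf : conv_wf bool_lt.
Proof.
  intro b; constructor; intros a [-> ->].
  constructor; intros c [E _]; discriminate E.
Qed.

Lemma cpl_leaf_weaken {G1 G2 A} :
  incl_at true G1 G2 -> cpl bool_lt_conv_wf true G1 A -> cpl bool_lt_conv_wf true G2 A.
Proof.
  intros hincl h; apply cpl_unfold in h; apply cpl_unfold.
  exact (cpl_step_dead_end_weaken bool_lt_true_dead_end hincl h).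
Qed.

Lemma cpls_leaf_weaken {G1 G2 A} :
  incl_at true G1 G2 -> cpls bool_lt_conv_wf true G1 A -> cpls bool_lt_conv_wf true G2 A.
Proof.
  intros hincl h; apply cpls_unfold in h; apply cpls_unfold.
  exact (cpls_step_dead_end_weaken bool_lt_true_dead_end hincl h).
Qed.

Lemma cpl_leaf_sound v {A} : cpl bool_lt_conv_wf true [] A -> eval_dead_end v A.
Proof.
  intro h; apply cpl_unfold in h.
  exact (cpl_step_dead_end_sound bool_lt_true_dead_end v h (fun _ hin => match hin with end)).
Qed.

Lemma cpls_leaf_sound v {A} : cpls bool_lt_conv_wf true [] A -> eval_dead_end v A.
Proof.
  intro h; apply cpls_unfold in h.
  exact (cpls_step_dead_end_sound bool_lt_true_dead_end v h (fun _ hin => match hin with end)).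
Qed.

Fixpoint eval_root (Q : form -> Prop) (f : form) : Prop :=
  match f with
  | Atom _ | Bot => False
  | Imp a b => eval_root Q a -> eval_root Q b
  | Dia a | Box a => Q a
  end.

Section Root.
Variable G0 : ctx bool.

Lemma cpl_step_root_sound G C :
  cpl_step bool_lt false (cpl_beyond bool_lt_conv_wf false) G C ->
  incl_at true G G0 -> incl_at true G0 G ->
  (forall A, In (A, false) G -> eval_root (cpl bool_lt_conv_wf true G0) A) ->
  eval_root (cpl bool_lt_conv_wf true G0) C.
Proof.
  induction 1 as [G A hin | G C hbot IHbot | G A B hB IHB | G A B hAB IHAB hA IHA
    | G A y Rxy [_ hy] | G A hsucc | G A C hdia IHdia hk IHk | G A C hbox IHbox hk IHk];
    simpl; intros hGG0 hG0G hG.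
  - exact (hG A hin).
  - destruct (IHbot hGG0 hG0G hG).
  - intro ha; apply IHB.
    + apply incl_at_cons_l; [discriminate | exact hGG0].
    + apply incl_at_cons_r, hG0G.
    + intros A' [[= ->] | hin]; auto.
  - exact (IHAB hGG0 hG0G hG (IHA hGG0 hG0G hG)).
  - destruct Rxy as [_ ->]; exact (cpl_leaf_weaken hGG0 hy).
  - destruct (hsucc true bool_lt_false_true) as [_ hy]; exact (cpl_leaf_weaken hGG0 hy).
  - apply (IHk true bool_lt_false_true); auto.
    apply (cpl_beyond_succ bool_lt_false_true), (cpl_leaf_weaken hG0G), IHdia; auto.
  - apply IHk; auto.
    intros y [_ ->].
    apply (cpl_beyond_succ bool_lt_false_true), (cpl_leaf_weaken hG0G), IHbox; auto.
Qed.

Hypothesis leaf_consistent : ~ cpls bool_lt_conv_wf true G0 Bot.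

Lemma cpls_step_root_sound G C :
  cpls_step bool_lt false (cpls_beyond bool_lt_conv_wf false) G C ->
  incl_at true G G0 -> incl_at true G0 G ->
  (forall A, In (A, false) G -> eval_root (cpls bool_lt_conv_wf true G0) A) ->
  eval_root (cpls bool_lt_conv_wf true G0) C.
Proof.
  induction 1 as [G A hin | G C hbot IHbot | G C z c [_ hz] | G A B hB IHB
    | G A B hAB IHAB hA IHA | G A y Rxy [_ hy] | G A hsucc | G A C hdia IHdia hk IHk
    | G A C z c [_ hz] hk IHk | G A C hbox IHbox hk IHk | G A C z c [_ hz] hk IHk];
    simpl; intros hGG0 hG0G hG;
    try destruct (clos_trans_bool_lt c) as [_ ->].
  - exact (hG A hin).
  - destruct (IHbot hGG0 hG0G hG).
  - destruct (leaf_consistent (cpls_leaf_weaken hGG0 hz)).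
  - intro ha; apply IHB.
    + apply incl_at_cons_l; [discriminate | exact hGG0].
    + apply incl_at_cons_r, hG0G.
    + intros A' [[= ->] | hin]; auto.
  - exact (IHAB hGG0 hG0G hG (IHA hGG0 hG0G hG)).
  - destruct Rxy as [_ ->]; exact (cpls_leaf_weaken hGG0 hy).
  - destruct (hsucc true bool_lt_false_true) as [_ hy]; exact (cpls_leaf_weaken hGG0 hy).
  - apply (IHk true bool_lt_false_true); auto.
    apply (cpls_beyond_succ bool_lt_false_true), (cpls_leaf_weaken hG0G), IHdia; auto.
  - exfalso; apply leaf_consistent, cpls_unfold.
    apply (cpls_step_dead_end_dia_bot bool_lt_true_dead_end (A := A)), cpls_unfold.
    exact (cpls_leaf_weaken hGG0 hz).
  - apply IHk; auto.
    intros y [_ ->].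
    apply (cpls_beyond_succ bool_lt_false_true), (cpls_leaf_weaken hG0G), IHbox; auto.
  - apply IHk; auto.
    intros y Ry; destruct (bool_lt_true_dead_end Ry).
Qed.

End Root.

Lemma cpl_not_neg_dia_bot : ~ cpl bool_lt_conv_wf false [(Bot, true)] (Neg (Dia Bot)).
Proof.
  intro h; apply cpl_unfold in h.
  refine (cpl_step_root_sound h (fun _ hin => hin) (fun _ hin => hin) _ _).
  - intros A [[=] | []].
  - apply cpl_unfold, cpl_hyp; now left.
Qed.

Lemma cpl_not_dia_box_imp :
  ~ cpl bool_lt_conv_wf false []
      (Imp (Imp (Dia (Atom 0)) (Box (Atom 1))) (Box (Imp (Atom 0) (Atom 1)))).
Proof.
  intro h; apply cpl_unfold in h.
  assert (himp : cpl bool_lt_conv_wf true [] (Imp (Atom 0) (Atom 1))).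
  { refine (cpl_step_root_sound h _ _ _ _); try intros A [].
    intro h0; destruct (cpl_leaf_sound (fun _ => False) h0). }
  discriminate (cpl_leaf_sound (fun n => n = 0) himp eq_refl).
Qed.

Lemma cpls_not_dia_box_imp :
  ~ cpls bool_lt_conv_wf false []
      (Imp (Imp (Dia (Atom 0)) (Box (Atom 1))) (Box (Imp (Atom 0) (Atom 1)))).
Proof.
  intro h; apply cpls_unfold in h.
  assert (himp : cpls bool_lt_conv_wf true [] (Imp (Atom 0) (Atom 1))).
  { refine (cpls_step_root_sound (cpls_leaf_sound (fun _ => False)) h _ _ _ _);
      try intros A [].
    intro h0; destruct (cpls_leaf_sound (fun _ => False) h0). }
  discriminate (cpls_leaf_sound (fun n => n = 0) himp eq_refl).
Qed.
Theorem theorem6 :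
  (forall A B : form, HCPL (Imp A B) -> HCPL A -> HCPL B) /\
  (forall A B : form, HCPLs (Imp A B) -> HCPLs A -> HCPLs B) /\
  (forall A : form, HCPL (Imp A A) /\ HCPLs (Imp A A)) /\
  (forall A B : form, HCPL (Imp A (Imp B A)) /\ HCPLs (Imp A (Imp B A))) /\
  (forall A B C : form,
     HCPL (Imp (Imp A (Imp B C)) (Imp (Imp A B) (Imp A C))) /\
     HCPLs (Imp (Imp A (Imp B C)) (Imp (Imp A B) (Imp A C)))) /\
  (forall A : form, HCPL (Imp Bot A) /\ HCPLs (Imp Bot A)) /\
  (forall A : form, HCPL A -> HCPL (Box A)) /\
  (forall A : form, HCPLs A -> HCPLs (Box A)) /\
  (forall A B : form,
     HCPL (Imp (Box (Imp A B)) (Imp (Box A) (Box B))) /\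
     HCPLs (Imp (Box (Imp A B)) (Imp (Box A) (Box B)))) /\
  (forall A B : form,
     HCPL (Imp (Box (Imp A B)) (Imp (Dia A) (Dia B))) /\
     HCPLs (Imp (Box (Imp A B)) (Imp (Dia A) (Dia B)))) /\
  (forall A : form,
     HCPL_tr (Imp (Box A) (Box (Box A))) /\ HCPLs_tr (Imp (Box A) (Box (Box A)))) /\
  HCPLs (Neg (Dia Bot)) /\
  (forall A : form, HCPLs_tr (Imp (Dia (Dia A)) (Dia A))) /\
  (exists (W : Type) (R : W -> W -> Prop) (Hwf : conv_wf R) (w : W) (G : ctx W),
     ~ cpl Hwf w G (Neg (Dia Bot))) /\
  (exists (W : Type) (R : W -> W -> Prop) (Hwf : conv_wf R) (w : W) (G : ctx W)
          (A B : form),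
     ~ cpl Hwf w G (Imp (Imp (Dia A) (Box B)) (Box (Imp A B)))) /\
  (exists (W : Type) (R : W -> W -> Prop) (Hwf : conv_wf R) (w : W) (G : ctx W)
          (A B : form),
     ~ cpls Hwf w G (Imp (Imp (Dia A) (Box B)) (Box (Imp A B)))).
Proof.
  split; [exact HCPL_mp |].
  split; [exact HCPLs_mp |].
  split; [intro A; exact (conj (HCPL_I A) (HCPLs_I A)) |].
  split; [intros A B; exact (conj (HCPL_K A B) (HCPLs_K A B)) |].
  split; [intros A B C; exact (conj (HCPL_S A B C) (HCPLs_S A B C)) |].
  split; [intro A; exact (conj (HCPL_botE A) (HCPLs_botE A)) |].
  split; [exact HCPL_nec |].
  split; [exact HCPLs_nec |].
  split; [intros A B; exact (conj (HCPL_Kbox A B) (HCPLs_Kbox A B)) |].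
  split; [intros A B; exact (conj (HCPL_Kdia A B) (HCPLs_Kdia A B)) |].
  split; [intro A; exact (conj (HCPL_tr_4box A) (HCPLs_tr_4box A)) |].
  split; [exact HCPLs_neg_dia_bot |].
  split; [exact HCPLs_tr_4dia |].
  split; [exists bool, bool_lt, bool_lt_conv_wf, false, [(Bot, true)];
          exact cpl_not_neg_dia_bot |].
  split; exists bool, bool_lt, bool_lt_conv_wf, false, [], (Atom 0), (Atom 1).
  - exact cpl_not_dia_box_imp.
  - exact cpls_not_dia_box_imp.
Qed.
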